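(* Let $n,t \ge 1$ be integers, and let $G$ be a simple graph on $n$ vertices such that no forest on $2t+1$ vertices is an induced subgraph of $G$. Then $|E(G)| \ge g(n,t)$. If equality holds and $n < 4t$, then every component of $G$ is a complete graph on $1$, $3$ or $4$ vertices. If equality holds and $n \ge 4t$, then $G \cong G_{n,t}$.
   Context: The function $g:\mathbb{N}\times\mathbb{N}\to\mathbb{N}$ is defined recursively by: $g(n,t) = 0$ for $n < 2t$; $g(n,t) = 3(n-2t)$ for $2t \le n \le 4t$; and $g(n,t) = g(n-1,t) + \lceil n/t \rceil - 1$ for $n > 4t$. $G_{n,t}$ denotes the graph on $n$ vertices which is a disjoint union of $t$ complete graphs whose numbers of vertices pairwise differ by at most one. *)

From mathcomp Require Import all_boot.
Set Implicit Arguments. Unset Strict Implicit. Unset Printing Implicit Defensive.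

(* g(n,t): g(n,t) = 0 for n < 2t; 3(n-2t) for 2t <= n <= 4t;
   g(n-1,t) + ceil(n/t) - 1 for n > 4t.  ceil(n/t) = (n + t - 1) %/ t (t >= 1). *)
Fixpoint g (n t : nat) : nat :=
  match n with
  | 0 => 0
  | m.+1 =>
      if m.+1 < 2 * t then 0
      else if m.+1 <= 4 * t then 3 * (m.+1 - 2 * t)
      else g m t + ((m.+1 + t - 1) %/ t - 1)
  end.

(* A simple graph is a symmetric irreflexive relation e on a finType T. *)

Definition nedges (T : finType) (e : rel T) : nat :=
  #|[set A : {set T} | [exists x, exists y, e x y && (A == [set x; y])]]|.

Definition induced_forest (T : finType) (e : rel T) (S : {set T}) : Prop :=
  forall c : seq T, all (fun x => x \in S) c -> uniq c -> 2 < size c ->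
    ~~ cycle e c.

Definition has_induced_forest (T : finType) (e : rel T) (k : nat) : Prop :=
  exists S : {set T}, #|S| = k /\ induced_forest e S.

Definition clique (T : finType) (e : rel T) (S : {set T}) : Prop :=
  forall x y, x \in S -> y \in S -> x != y -> e x y.

Definition component (T : finType) (e : rel T) (x : T) : {set T} :=
  [set y | connect e x y].

(* G_{n,t}: vertices 0..n-1, two distinct vertices adjacent iff congruent
   mod t; the residue classes have sizes floor(n/t) or ceil(n/t), so this
   is the disjoint union of t complete graphs whose orders differ by <= 1. *)
Definition Gnt (n t : nat) : rel 'I_n :=
  fun i j => (i != j) && (i %% t == j %% t).

Definition graph_iso (T T' : finType) (e : rel T) (e' : rel T') : Prop :=
  exists f : T -> T', bijective f /\ forall x y, e x y = e' (f x) (f y).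
Arguments Gnt : clear implicits.

From mathcomp Require Import all_boot all_order all_algebra.
From mathcomp Require Import ring lra zify.
Set Implicit Arguments. Unset Strict Implicit. Unset Printing Implicit Defensive.
Import Order.TTheory GRing.Theory Num.Theory.

(* Every induced forest of G has at most 2t vertices.  On the other hand G has an
   induced forest on at least W = sum_v w(d(v)) vertices, where w(d) = min(1, 2/(d+1))
   (Alon, Kahn and Seymour), and on strictly more if some vertex has two non-adjacent
   neighbours.  By induction: a forest of G - v extends by v when d(v) <= 1, and v can
   be chosen with W(G - v) + [d(v) <= 1] >= W(G), since the average of the left-hand
   side over all v is exactly W(G).  Hence W <= 2t.
   Since d |-> 2/(d+1) is convex, k(k+1) w(d) >= 4k - 2d for every k >= 3, with
   equality only for d in {k-1, k} (and d = 0 when k = 3).  Summing over the vertices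
   gives 2|E| + k(k+1)t >= 2kn, which is |E| >= g(n,t) for k = 3 if 2t <= n <= 4t and
   for k = floor(n/t) if n >= 4t.  In case of equality all the degrees are as above,
   W = 2t and no vertex has two non-adjacent neighbours, so G is a disjoint union of
   cliques; for n >= 4t they have orders k and k+1, and W = 2t says there are t of
   them, which is G_{n,t}. *)

Section InducedForests.
Variables (T : finType) (e : rel T).
Hypotheses (e_sym : symmetric e) (e_irr : irreflexive e).

Definition deg (U : {set T}) (u : T) : nat := #|[set v in U | e u v]|.

Lemma deg_subset (U V : {set T}) u : U \subset V -> deg U u <= deg V u.
Proof.
move=> sUV; apply: subset_leq_card; apply/subsetP => v.
by rewrite !inE => /andP [/(subsetP sUV) -> ->].
Qed.

Lemma cycle_deg_ge2 (c : seq T) w :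
  uniq c -> 2 < size c -> cycle e c -> w \in c -> 1 < #|[set v in c | e w v]|.
Proof.
move=> uc sc cc wc; have [i s def_c] := rot_to wc.
have sub_c : {subset w :: s <= c} by move=> v; rewrite -def_c mem_rot.
have sz : 2 < size (w :: s) by rewrite -def_c size_rot.
move: (rot_uniq i c) (rot_cycle i e c); rewrite def_c uc cc.
clear def_c; case: s sub_c sz => [|x s] //; case/lastP: s => [|s y] // sub_c _.
rewrite /= rcons_path last_rcons => /and3P [_ xNsy _] /and3P [ewx _ eyw].
have xy : x != y by apply: contraNneq xNsy => ->; rewrite mem_rcons mem_head.
have /subset_leq_card : [set x; y] \subset [set v in c | e w v].
  apply/subsetP => v; rewrite !inE => /orP [] /eqP ->.
    by rewrite sub_c ?inE ?eqxx ?orbT.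
  by rewrite sub_c ?inE ?mem_rcons ?mem_head ?orbT // e_sym.
by rewrite cards2 xy.
Qed.

Lemma induced_forest0 : induced_forest e set0.
Proof. by move=> [|x c] //= /andP []; rewrite inE. Qed.

Lemma induced_forestS (F F' : {set T}) :
  F' \subset F -> induced_forest e F -> induced_forest e F'.
Proof.
move=> sF'F forestF c cF'; apply: forestF.
by apply/allP => x /(allP cF') /(subsetP sF'F).
Qed.

Lemma induced_forestU1 (F : {set T}) w :
  induced_forest e F -> deg F w <= 1 -> induced_forest e (w |: F).
Proof.
move=> forestF degw c cwF uc sc; apply/negP => cc.
have [wc | wNc] := boolP (w \in c); last first.
  suff cF : all (fun x => x \in F) c by have := forestF c cF uc sc; rewrite cc.
  apply/allP => x xc; move: (allP cwF x xc); rewrite !inE.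
  by case: eqP => [xw|//]; rewrite -xw xc in wNc.
have := cycle_deg_ge2 uc sc cc wc; rewrite ltnNge => /negP; apply.
apply: leq_trans degw; apply: subset_leq_card; apply/subsetP => v.
rewrite !inE => /andP [vc ewv]; rewrite ewv andbT.
move: (allP cwF v vc); rewrite !inE => /orP [/eqP vw|//].
by rewrite vw e_irr in ewv.
Qed.

(* A cycle inside at most three vertices is a triangle, so it would join a and c. *)
Lemma induced_forest_small (U : {set T}) a c :
  #|U| <= 3 -> a \in U -> c \in U -> a != c -> ~~ e a c -> induced_forest e U.
Proof.
move=> le_U3 aU cU ac nac cy cyU ucy scy; apply/negP => ccy.
have cyE : [set v in cy] = U.
  apply/eqP; rewrite eqEcard cardsE (card_uniqP ucy) (leq_trans le_U3 scy) andbT.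
  by apply/subsetP => v; rewrite inE => /(allP cyU).
have acy : a \in cy by move: aU; rewrite -cyE inE.
have := cycle_deg_ge2 ucy scy ccy acy; rewrite ltnNge => /negP; apply.
have /subset_leq_card/leq_trans -> // : [set v in cy | e a v] \subset U :\: [set a; c].
  apply/subsetP => v; rewrite !inE => /andP [vcy eav].
  rewrite (allP cyU v vcy) andbT; apply/norP; split.
    by apply: contraTneq eav => ->; rewrite e_irr.
  by apply: contraNneq nac => <-.
rewrite cardsD (setIidPr _) ?cards2 ?ac; first by move: le_U3; lia.
by apply/subsetP => v; rewrite !inE => /orP [] /eqP ->.
Qed.

Lemma card_induced_forest_lt k (F : {set T}) :
  ~ has_induced_forest e k -> induced_forest e F -> #|F| < k.
Proof.
move=> noF forestF; rewrite ltnNge; apply/negP => le_kF; apply: noF.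
exists [set x in take k (enum F)]; split.
  by rewrite cardsE (card_uniqP (take_uniq _ (enum_uniq _))) size_takel -?cardE.
apply: induced_forestS forestF; apply/subsetP => x.
by rewrite inE => /mem_take; rewrite mem_enum.
Qed.

End InducedForests.

Section Averaging.
Local Open Scope ring_scope.

Lemma sumr_gt0_mem (R : numDomainType) (I : finType) (A : {pred I}) (F : I -> R) i0 :
  i0 \in A -> (forall i, i \in A -> 0 <= F i) -> 0 < F i0 -> 0 < \sum_(i in A) F i.
Proof.
move=> Ai0 F_ge0 F_i0_gt0; rewrite (bigD1 i0) //= ltr_pwDl // sumr_ge0 // => i.
by case/andP => /F_ge0.
Qed.

Lemma exists_ge_average (R : realDomainType) (I : finType) (A : {set I}) (b : I -> R) s i0 :
  i0 \in A -> #|A|%:R * s <= \sum_(i in A) b i ->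
  (exists2 i, i \in A & s < b i) \/ s <= b i0.
Proof.
move=> Ai0 le_sum; have [le_s_bi0|lt_bi0_s] := leP s (b i0); first by right.
left; apply/exists_inP; apply: contraTT le_sum => /exists_inPn b_le_s.
have gap_gt0 : 0 < \sum_(i in A) (s - b i).
  apply: sumr_gt0_mem Ai0 _ _; last by rewrite subr_gt0.
  by move=> i /b_le_s; rewrite subr_ge0 leNgt.
by rewrite sumrB sumr_const -mulr_natl subr_gt0 in gap_gt0; rewrite -ltNge.
Qed.

End Averaging.

Section ForestWeight.
Local Open Scope ring_scope.

Definition forest_weight (d : nat) : rat := if d is 0 then 1 else 2 / d.+1%:R.

Lemma forest_weight_mulrn d : (0 < d)%N -> forest_weight d *+ d.+1 = 2.
Proof. by case: d => // d _; rewrite /= -(mulr_natr (2 / _)) divfK ?pnatr_eq0. Qed.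

Lemma forest_weight_step d :
  forest_weight d *+ d.+1 = forest_weight d.-1 *+ d + (d <= 1)%N%:R.
Proof.
case: d => [|[|d]]; first by rewrite /= mulr0n add0r.
  by rewrite forest_weight_mulrn.
by rewrite !forest_weight_mulrn ?addr0.
Qed.

Lemma forest_weight_le1 d : forest_weight d <= 1.
Proof.
by case: d => //= d; rewrite ler_pdivrMr ?ltr0n // mul1r ler_nat.
Qed.

Lemma forest_weight_lt1 d : (1 < d)%N -> forest_weight d < 1.
Proof.
by case: d => //= d d_gt0; rewrite ltr_pdivrMr ?ltr0n // mul1r ltr_nat.
Qed.

End ForestWeight.

Section ForestBound.
Local Open Scope ring_scope.
Variables (T : finType) (e : rel T).
Hypotheses (e_sym : symmetric e) (e_irr : irreflexive e).

Local Notation deg := (deg e).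

Definition weight (U : {set T}) : rat := \sum_(u in U) forest_weight (deg U u).

Definition has_induced_path3 (U : {set T}) : Prop :=
  exists a b c, [/\ [set a; b; c] \subset U, e a b, e b c, a != c & ~~ e a c].

Lemma weight_setT : weight setT = \sum_(u : T) forest_weight (deg setT u).
Proof. by apply: eq_bigl => u; rewrite inE. Qed.

Lemma deg_setD1 (U : {set T}) w u :
  w \in U -> deg U u = (deg (U :\ w) u + e u w)%N.
Proof.
move=> Uw; rewrite /deg (cardsD1 w) !inE Uw /= addnC; congr (_ + _)%N.
by apply: eq_card => v; rewrite !inE; case: eqP => // ->.
Qed.

Lemma deg_lt_card (U : {set T}) u : u \in U -> (deg U u < #|U|)%N.
Proof.
move=> Uu; apply: proper_card; rewrite properE; apply/andP; split.
  by apply/subsetP => v; rewrite inE => /andP [].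
by apply/subsetPn; exists u; rewrite // inE e_irr andbF.
Qed.

Lemma sum_forest_weight_setD1 (U : {set T}) u : u \in U ->
  \sum_(w in U :\ u) forest_weight (deg (U :\ w) u) =
  forest_weight (deg U u).-1 *+ deg U u + forest_weight (deg U u) *+ (#|U| - (deg U u).+1).
Proof.
move=> Uu; set N := [set v in U | e u v].
have sNU : N \subset U :\ u.
  apply/subsetP => v; rewrite !inE => /andP [-> euv].
  by case: eqP euv => // ->; rewrite e_irr.
have deg_nbr w : w \in N -> deg (U :\ w) u = (deg U u).-1.
  by rewrite inE => /andP [Uw euw]; rewrite (deg_setD1 u Uw) euw addn1.
have deg_non w : w \in (U :\ u) :\: N -> deg (U :\ w) u = deg U u.
  rewrite !inE => /andP [+ /andP [_ Uw]]; rewrite Uw /= => /negbTE euw.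
  by rewrite (deg_setD1 u Uw) euw addn0.
rewrite (big_setID N) /= (setIidPr sNU).
rewrite (eq_bigr _ (fun w Nw => congr1 forest_weight (deg_nbr w Nw))).
rewrite (eq_bigr _ (fun w Nw => congr1 forest_weight (deg_non w Nw))) !sumr_const.
by rewrite cardsD (setIidPr sNU) (cardsD1 u U) Uu add1n subSS.
Qed.

Lemma sum_weight_setD1 (U : {set T}) :
  \sum_(w in U) (weight (U :\ w) + (deg U w <= 1)%N%:R) = #|U|%:R * weight U.
Proof.
rewrite big_split /= /weight (exchange_big_dep (mem U)) /=; last first.
  by move=> w u _; rewrite inE => /andP [].
rewrite -big_split mulr_sumr; apply: eq_bigr => u Uu.
rewrite (eq_bigl (mem (U :\ u))); last by move=> w; rewrite !inE Uu andbT andbC eq_sym.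
rewrite sum_forest_weight_setD1 //= addrAC -forest_weight_step -mulrnDr mulr_natl.
by rewrite subnKC // deg_lt_card.
Qed.

Lemma induced_forest_extend (U F : {set T}) w :
  w \in U -> F \subset U :\ w -> induced_forest e F ->
  exists2 F' : {set T}, F' \subset U &
    induced_forest e F' /\ (#|F| + (deg U w <= 1) <= #|F'|)%N.
Proof.
move=> Uw sFU forestF.
have wNF : w \notin F by apply/negP => /(subsetP sFU); rewrite !inE eqxx.
have sFU' : F \subset U := subset_trans sFU (subsetDl U [set w]).
have [deg_le1|_] := leqP (deg U w) 1; last by exists F; rewrite ?addn0.
exists (w |: F); first by rewrite subUset sub1set Uw.
split; last by rewrite cardsU1 wNF addnC.
by apply: induced_forestU1 forestF (leq_trans (deg_subset _ _ sFU') deg_le1).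
Qed.

Lemma exists_removal_above_weight (U : {set T}) w0 : w0 \in U ->
  (exists2 w, w \in U & weight U < weight (U :\ w) + (deg U w <= 1)%N%:R) \/
  weight U <= weight (U :\ w0) + (deg U w0 <= 1)%N%:R.
Proof. by move=> Uw0; apply: exists_ge_average Uw0 _; rewrite sum_weight_setD1. Qed.

Lemma exists_forest_ge_weight (U : {set T}) :
  exists2 F : {set T}, F \subset U & induced_forest e F /\ weight U <= #|F|%:R.
Proof.
have [n] := ubnP #|U|; elim: n => // n IHn in U *; rewrite ltnS => le_Un.
have [->|[w0 Uw0]] := set_0Vmem U.
  exists set0; rewrite ?sub0set //; split; first exact: induced_forest0.
  by rewrite /weight big_set0 cards0.
have [w Uw le_bw] : exists2 w, w \in U & weight U <= weight (U :\ w) + (deg U w <= 1)%N%:R.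
  by case: (exists_removal_above_weight Uw0) => [[w Uw /ltW]|]; [exists w | exists w0].
have lt_Uw_n : (#|U :\ w| < n)%N := leq_trans (proper_card (properD1 Uw)) le_Un.
have [F sFUw [forestF le_wF]] := IHn (U :\ w) lt_Uw_n.
have [F' sF'U [forestF' le_FF']] := induced_forest_extend Uw sFUw forestF.
exists F' => //; split => //; rewrite -(ler_nat rat) natrD in le_FF'; lra.
Qed.

Lemma weight_lt_card (U : {set T}) b : b \in U -> (1 < deg U b)%N -> weight U < #|U|%:R.
Proof.
move=> Ub deg_b; have : 0 < \sum_(u in U) (1 - forest_weight (deg U u)).
  apply: sumr_gt0_mem Ub _ _ => [u _|]; rewrite ?subr_ge0 ?subr_gt0.
    exact: forest_weight_le1.
  exact: forest_weight_lt1.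
by rewrite sumrB sumr_const subr_gt0.
Qed.

Lemma exists_forest_gt_weight (U : {set T}) : has_induced_path3 U ->
  exists2 F : {set T}, F \subset U & induced_forest e F /\ weight U < #|F|%:R.
Proof.
have [n] := ubnP #|U|; elim: n => // n IHn in U *; rewrite ltnS => le_Un.
move=> [a [b [c [abcU eab ebc ac nac]]]].
have [aU bU cU] : [/\ a \in U, b \in U & c \in U].
  by split; apply: (subsetP abcU); rewrite !inE eqxx ?orbT.
have [le_U3|lt_3U] := leqP #|U| 3.
  exists U => //; split; first exact: induced_forest_small le_U3 aU cU ac nac.
  apply: weight_lt_card bU _; rewrite /deg.
  have /subset_leq_card : [set a; c] \subset [set v in U | e b v].
    by apply/subsetP => v; rewrite !inE => /orP [] /eqP ->; rewrite ?aU ?cU ?ebc // e_sym.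
  by rewrite cards2 ac.
have [w0 Uw0 w0Nabc] : exists2 w0, w0 \in U & w0 \notin [set a; b; c].
  apply/subsetPn; apply: contraTN lt_3U => /subset_leq_card le_U_abc.
  rewrite -leqNgt (leq_trans le_U_abc) // (leq_trans (leq_card_setU _ _)) //.
  by rewrite cards2 cards1; case: (a != b).
have path3_Uw0 : has_induced_path3 (U :\ w0).
  by exists a, b, c; split; rewrite // subsetD1 abcU w0Nabc.
have lt_Uw0_n : (#|U :\ w0| < n)%N := leq_trans (proper_card (properD1 Uw0)) le_Un.
have [F0 sF0 [forestF0 lt_wF0]] := IHn (U :\ w0) lt_Uw0_n path3_Uw0.
have [F1 sF1U [forestF1 le_F0F1]] := induced_forest_extend Uw0 sF0 forestF0.
rewrite -(ler_nat rat) natrD in le_F0F1.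
(* Induction makes the bound at w0 strict; if it is below [weight U], another bound
   is strictly above it. *)
case: (exists_removal_above_weight Uw0) => [[w Uw lt_bw]|le_bw0]; last first.
  by exists F1 => //; split => //; lra.
have [F sFUw [forestF le_wF]] := exists_forest_ge_weight (U :\ w).
have [F' sF'U [forestF' le_FF']] := induced_forest_extend Uw sFUw forestF.
rewrite -(ler_nat rat) natrD in le_FF'.
by exists F' => //; split => //; lra.
Qed.

End ForestBound.

Section Components.
Variables (T : finType) (e : rel T).
Hypotheses (e_sym : symmetric e) (e_irr : irreflexive e).

Local Notation deg := (deg e).

Lemma sum_deg : \sum_(u : T) deg setT u = 2 * nedges e.
Proof.
set E := [set A : {set T} | [exists x, exists y, e x y && (A == [set x; y])]].
have -> : \sum_(u : T) deg setT u = \sum_(p : T * T | e p.1 p.2) 1.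
  rewrite -(pair_big_dep xpredT (fun u v => e u v) (fun _ _ => 1)) /=.
  by apply: eq_bigr => u _; rewrite /deg -sum1_card; apply: eq_bigl => v; rewrite !inE.
rewrite (partition_big (fun p => [set p.1; p.2]) (mem E)) /=; last first.
  move=> [x y] /= exy; rewrite inE.
  by apply/existsP; exists x; apply/existsP; exists y; rewrite exy /=.
rewrite /nedges -/E mulnC -sum_nat_const; apply: eq_bigr => A.
rewrite inE => /existsP [x /existsP [y /andP [exy /eqP ->]]].
have xy : x != y by apply: contraTneq exy => ->; rewrite e_irr.
rewrite (eq_bigl (mem [set (x, y); (y, x)])) ?sum1_card ?cards2 ?xpair_eqE ?negb_and ?xy //.
move=> [u v] /=; rewrite !inE !xpair_eqE; apply/andP/idP => [[euv /eqP uvE]|]; last first.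
  case/orP => /andP [/eqP -> /eqP ->]; first by [].
  by rewrite e_sym setUC.
have uv : u != v by apply: contraTneq euv => ->; rewrite e_irr.
have : u \in [set x; y] by rewrite -uvE set21.
have : v \in [set x; y] by rewrite -uvE set22.
by rewrite !inE => /orP [] /eqP vE /orP [] /eqP uE; move: uv; rewrite uE vE !eqxx ?orbT.
Qed.

Lemma component_eqE x y : (component e x == component e y) = connect e x y.
Proof.
have sym_connect := sym_connect_sym e_sym.
apply/eqP/idP => [xyE|cxy].
  have : y \in component e y by rewrite inE connect0.
  by rewrite -xyE inE.
apply/setP => z; rewrite !inE; apply/idP/idP; last exact: connect_trans.
by apply: connect_trans; rewrite sym_connect.
Qed.

Definition components : {set {set T}} := [set component e x | x : T].

Lemma big_components (R : Type) (idx : R) (op : Monoid.com_law idx) (F : T -> R) :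
  \big[op/idx]_(u : T) F u = \big[op/idx]_(A in components) \big[op/idx]_(u in A) F u.
Proof.
rewrite (partition_big_imset (component e)); apply: eq_big => // A /imsetP [x _ ->].
by apply: eq_bigl => u; rewrite inE component_eqE sym_connect_sym.
Qed.

End Components.

Section ClusterGraphs.
Variables (T : finType) (e : rel T).
Hypotheses (e_sym : symmetric e) (e_irr : irreflexive e).
Hypothesis no_path3 : ~ has_induced_path3 e setT.

Local Notation deg := (deg e).

Lemma edge_trans a b c : e a b -> e b c -> a != c -> e a c.
Proof.
move=> eab ebc ac; apply/negPn/negP => nac; apply: no_path3.
by exists a, b, c; rewrite subsetT.
Qed.

Lemma connect_edge x y : connect e x y -> x != y -> e x y.
Proof.
case/connectP => p + ->; elim: p x => [|z p IHp] x /=; first by rewrite eqxx.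
case/andP => exz /IHp IHz xl; have [zl|/IHz] := eqVneq z (last z p); first by rewrite -zl.
by move/(edge_trans exz)/(_ xl).
Qed.

Lemma clique_component x : clique e (component e x).
Proof.
move=> y z; rewrite !inE => cxy cxz; apply: connect_edge.
by apply: connect_trans cxz; rewrite sym_connect_sym.
Qed.

Lemma card_component x : #|component e x| = (deg setT x).+1.
Proof.
have -> : component e x = x |: [set v in setT | e x v].
  apply/setP => y; rewrite !inE; have [->|yx] /= := eqVneq y x; first exact: connect0.
  apply/idP/idP => [cxy|/connect1 //]; apply: connect_edge cxy _; by rewrite eq_sym.
by rewrite cardsU1 !inE e_irr.
Qed.

Lemma weight_components : (forall u, 0 < deg setT u)%N ->
  (weight e setT = (2 * #|components e|)%:R)%R.
Proof.
move=> deg_gt0; rewrite weight_setT (big_components e_sym) natrM mulr_natr -sumr_const.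
apply: eq_bigr => A /imsetP [x _ ->].
have deg_comp u : u \in component e x -> deg setT u = deg setT x.
  rewrite inE -(component_eqE e_sym) => /eqP xuE.
  by apply: succn_inj; rewrite -!card_component xuE.
rewrite (eq_bigr _ (fun u xu => congr1 _ (deg_comp u xu))) sumr_const.
by rewrite card_component forest_weight_mulrn.
Qed.

End ClusterGraphs.

Section SecantGap.
Local Open Scope ring_scope.

(* k(k+1) times the height of [forest_weight d] above the secant of the convex
   map d |-> 2/(d+1) through d = k-1 and d = k. *)
Definition secant_gap (k d : nat) : rat :=
  (k * k.+1)%:R * forest_weight d - (4 * k)%:R + (2 * d)%:R.

Lemma secant_gapE k d : (0 < d)%N ->
  secant_gap k d = 2 * ((k * k.+1 + d * d.+1)%:R - (2 * k * d.+1)%:R) / d.+1%:R.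
Proof.
move=> d_gt0; rewrite /secant_gap (_ : forest_weight d = 2 / d.+1%:R).
  by rewrite !natrD !natrM -!natr1; field; rewrite natr1 pnatr_eq0.
by case: d d_gt0.
Qed.

Lemma secant_gap_ge0 k d : (3 <= k)%N -> 0 <= secant_gap k d.
Proof.
move=> k_ge3; case: d => [|d].
  by rewrite /secant_gap /= mulr1 addr0 subr_ge0 ler_nat; nia.
rewrite secant_gapE // divr_ge0 // mulr_ge0 // subr_ge0 ler_nat.
by case: (leqP k d.+1); nia.
Qed.

Lemma secant_gap_eq0 k d : (3 <= k)%N -> secant_gap k d = 0 ->
  [\/ d = k.-1, d = k | k = 3 /\ d = 0]%N.
Proof.
move=> k_ge3; case: d => [|d].
  rewrite /secant_gap /= mulr1 addr0 => /eqP; rewrite subr_eq0 eqr_nat => /eqP kE.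
  by apply: Or33; split => //; nia.
rewrite secant_gapE // => /eqP; rewrite !mulf_eq0 invr_eq0 !pnatr_eq0 subr_eq0 eqr_nat /=.
move=> /eqP gap0; case: (ltngtP k d.+1) => [lt_kd|lt_dk|<-]; last exact: Or32.
  by nia.
by apply: Or31; nia.
Qed.

End SecantGap.

Section EdgeBound.
Local Open Scope ring_scope.
Variables (T : finType) (e : rel T) (t : nat).
Hypotheses (e_sym : symmetric e) (e_irr : irreflexive e).
Hypothesis no_forest : ~ has_induced_forest e (2 * t + 1).

Local Notation n := #|T|.
Local Notation m := (nedges e).
Local Notation W := (weight e setT).

Lemma sum_secant_gap k :
  \sum_(u : T) secant_gap k (deg e setT u) =
  (k * k.+1)%:R * W - (4 * k * n)%:R + (4 * m)%:R.
Proof.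
rewrite big_split sumrB /= -mulr_sumr -weight_setT sumr_const -natr_sum -big_distrr /=.
by rewrite (sum_deg e_sym e_irr) mulnA -mulrnA.
Qed.

Lemma weight_le : W <= (2 * t)%:R.
Proof.
have [F _ [forestF le_WF]] := exists_forest_ge_weight e_sym e_irr setT.
apply: le_trans le_WF _; rewrite ler_nat -ltnS -[(2 * t).+1]addn1.
exact: card_induced_forest_lt no_forest forestF.
Qed.

Lemma weight_lt_of_path3 : has_induced_path3 e setT -> W < (2 * t)%:R.
Proof.
move=> path3; have [F _ [forestF lt_WF]] := exists_forest_gt_weight e_sym e_irr path3.
apply: lt_le_trans lt_WF _; rewrite ler_nat -ltnS -[(2 * t).+1]addn1.
exact: card_induced_forest_lt no_forest forestF.
Qed.

Lemma sum_secant_gap_ge0 k : (3 <= k)%N -> 0 <= \sum_(u : T) secant_gap k (deg e setT u).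
Proof. by move=> k_ge3; apply: sumr_ge0 => u _; apply: secant_gap_ge0. Qed.

Lemma nedges_secant_bound k : (3 <= k)%N -> (2 * k * n <= 2 * m + k * k.+1 * t)%N.
Proof.
move=> k_ge3; have := sum_secant_gap_ge0 k_ge3; rewrite sum_secant_gap => gap_ge0.
have : (k * k.+1)%:R * W <= (k * k.+1)%:R * (2 * t)%:R := ler_wpM2l (ler0n _ _) weight_le.
rewrite -natrM => le_kW; have : (4 * k * n)%:R <= (k * k.+1 * (2 * t) + 4 * m)%:R :> rat.
  by rewrite natrD; lra.
by rewrite ler_nat; nia.
Qed.

Lemma nedges_secant_bound_eq k : (3 <= k)%N -> (2 * m + k * k.+1 * t = 2 * k * n)%N ->
  [/\ W = (2 * t)%:R, ~ has_induced_path3 e setT &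
      forall u, secant_gap k (deg e setT u) = 0].
Proof.
move=> k_ge3 m_eq; have gap_ge0 := sum_secant_gap_ge0 k_ge3.
have kk_gt0 : 0 < (k * k.+1)%:R :> rat by rewrite ltr0n muln_gt0 (leq_trans _ k_ge3).
have gapE : \sum_(u : T) secant_gap k (deg e setT u) = (k * k.+1)%:R * (W - (2 * t)%:R).
  have : (4 * m + k * k.+1 * (2 * t))%:R = (4 * k * n)%:R :> rat by congr _%:R; nia.
  by rewrite sum_secant_gap natrD !natrM => mE; rewrite -mE; ring.
have W_eq : W = (2 * t)%:R.
  apply/eqP; rewrite eq_le weight_le /= -subr_ge0.
  by rewrite gapE pmulr_rge0 in gap_ge0.
split=> // [path3|u].
  by have := weight_lt_of_path3 path3; rewrite W_eq ltxx.
have gap_sum0 : \sum_(u : T) secant_gap k (deg e setT u) = 0.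
  by rewrite gapE W_eq subrr mulr0.
by apply: (psumr_eq0P _ gap_sum0) => // v _; apply: secant_gap_ge0.
Qed.

End EdgeBound.

Lemma g_small n t : n < 2 * t -> g n t = 0.
Proof. by case: n => [|n] //= ->. Qed.

Lemma g_mid n t : 0 < t -> 2 * t <= n <= 4 * t -> g n t = 3 * (n - 2 * t).
Proof.
case: n => [|n] t_gt0 /andP [le_2t_n le_n_4t]; first by lia.
by rewrite /= ltnNge le_2t_n le_n_4t.
Qed.

Lemma g_step n t : 0 < t -> 4 * t <= n -> g n.+1 t = g n t + n %/ t.
Proof.
move=> t_gt0 le_4t_n; rewrite [g n.+1 t]/= ltnNge (leq_trans _ (leqW le_4t_n)) /=; last lia.
rewrite leqNgt ltnS le_4t_n /= (_ : n.+1 + t - 1 = 1 * t + n); last by lia.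
by rewrite divnMDl // addKn.
Qed.

Lemma g_secant_mid n t : 0 < t -> 2 * t <= n <= 4 * t -> 2 * g n t + 3 * 4 * t = 2 * 3 * n.
Proof. by move=> t_gt0 n_range; rewrite g_mid //; case/andP: n_range; lia. Qed.

Lemma g_secant_big n t : 0 < t -> 4 * t <= n ->
  2 * g n t + n %/ t * (n %/ t).+1 * t = 2 * (n %/ t) * n.
Proof.
move=> t_gt0; elim: n => [|n IHn] le_4t_n; first by lia.
have [lt_4t_n|lt_n_4t|eq_4t_n] := ltngtP (4 * t) n.+1.
- have {}IHn := IHn (ltnSE lt_4t_n).
  rewrite g_step // (divnS _ t_gt0).
  case: (boolP (t %| n.+1)) => [dvd_t_n1|_] /=; last by nia.
  by have := divnK dvd_t_n1; rewrite (divnS _ t_gt0) dvd_t_n1; nia.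
- by lia.
- by rewrite -eq_4t_n mulnK // g_mid ?eq_4t_n ?leqnn ?andbT //; lia.
Qed.

Section ClusterGraphIso.
Variables (T : finType) (e : rel T) (t k : nat).
Hypotheses (e_sym : symmetric e) (e_irr : irreflexive e).
Hypothesis no_path3 : ~ has_induced_path3 e setT.
Hypothesis card_components : #|components e| = t.
Hypothesis card_component_k : forall x, #|component e x| = k \/ #|component e x| = k.+1.

Local Notation comp := (component e).
Let large := [set A in components e | #|A| == k.+1].

Lemma card_T_components : #|T| = k * t + #|large|.
Proof.
have -> : #|T| = \sum_(u : T) 1 by rewrite sum1_card.
rewrite (big_components e_sym) /=.
rewrite (eq_bigr (fun A : {set T} => k + (#|A| == k.+1))); last first.
  move=> A /imsetP [x _ ->]; rewrite sum1_card.
  by case: (card_component_k x) => ->; rewrite ?eqxx ?addn1 // (ltn_eqF (ltnSn k)) addn0.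
rewrite big_split /= sum_nat_const card_components mulnC; congr (_ + _).
rewrite -sum1_card big_mkcond [RHS]big_mkcond; apply: eq_bigr => A _.
by rewrite inE; case: (A \in components e); case: (#|A| == k.+1).
Qed.

(* Listing the components of order k+1 first is what makes [code x < #|T|]. *)
Let order := enum large ++ enum (components e :\: large).

Lemma size_order : size order = t.
Proof.
rewrite size_cat -!cardE -card_components -(cardsID large (components e)) (setIidPr _) //.
by apply/subsetP => A; rewrite inE => /andP [].
Qed.

Lemma component_in_order x : comp x \in order.
Proof.
have comp_x : comp x \in components e by apply: imset_f.
by rewrite mem_cat !mem_enum !inE comp_x andbT orbN.
Qed.

Let pi x := index (comp x) order.
Let rho x := index x (enum (comp x)).
Let code x := pi x + t * rho x.

Lemma pi_lt x : pi x < t.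
Proof. by rewrite -size_order index_mem component_in_order. Qed.

Lemma pi_lt_large x : #|comp x| = k.+1 -> pi x < #|large|.
Proof.
move=> card_x.
have large_x : comp x \in enum large by rewrite mem_enum inE imset_f ?card_x /=.
by rewrite /pi index_cat large_x cardE index_mem.
Qed.

Lemma rho_lt x : rho x < #|comp x|.
Proof. by rewrite cardE index_mem mem_enum inE connect0. Qed.

Lemma code_lt x : code x < #|T|.
Proof.
rewrite card_T_components /code; have := rho_lt x; have := pi_lt x.
case: (card_component_k x) => card_x; rewrite card_x; first by nia.
by have := pi_lt_large card_x; nia.
Qed.

Lemma code_mod x : code x %% t = pi x.
Proof. by rewrite /code addnC mulnC modnMDl modn_small // pi_lt. Qed.

Lemma code_div x : code x %/ t = rho x.
Proof.
rewrite /code addnC mulnC divnMDl ?divn_small ?pi_lt ?addn0 //.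
exact: leq_ltn_trans (pi_lt x).
Qed.

Lemma pi_eqE x y : (pi x == pi y) = connect e x y.
Proof.
rewrite -(component_eqE e_sym) /pi; apply/eqP/eqP => [|-> //].
by move/(congr1 (nth set0 order)); rewrite !nth_index ?component_in_order.
Qed.

Lemma code_inj : injective code.
Proof.
move=> x y code_xy; have /eqP := congr1 (modn^~ t) code_xy.
rewrite !code_mod pi_eqE -(component_eqE e_sym) => /eqP comp_xy.
have := congr1 (divn^~ t) code_xy; rewrite !code_div /rho comp_xy.
have y_comp : y \in enum (comp y) by rewrite mem_enum inE connect0.
have x_comp : x \in enum (comp y) by rewrite mem_enum -comp_xy inE connect0.
exact: index_inj x_comp y_comp.
Qed.

Lemma cluster_graph_iso : graph_iso e (Gnt #|T| t).
Proof.
exists (fun x => Ordinal (code_lt x)); split.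
  apply: inj_card_bij; last by rewrite card_ord.
  by move=> x y /(congr1 val) /code_inj.
move=> x y; rewrite /Gnt /= !code_mod pi_eqE.
have -> : (Ordinal (code_lt x) != Ordinal (code_lt y)) = (x != y).
  by apply/negb_inj; rewrite !negbK; apply/eqP/eqP => [/(congr1 val)/code_inj|->].
apply/idP/andP => [exy|[xy /(connect_edge no_path3)]]; last exact.
by split; [apply: contraTneq exy => ->; rewrite e_irr | exact: connect1].
Qed.

End ClusterGraphIso.

Lemma nedges_eq0 (T : finType) (e : rel T) : nedges e = 0 -> forall x y, ~~ e x y.
Proof.
rewrite /nedges => /cards0_eq E0 x y; apply/negP => exy.
suff : [set x; y] \in set0 by rewrite inE.
by rewrite -E0 inE; apply/existsP; exists x; apply/existsP; exists y; rewrite exy /=.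
Qed.

Lemma edgeless_component (T : finType) (e : rel T) :
  symmetric e -> irreflexive e -> nedges e = 0 ->
  forall x, clique e (component e x) /\ #|component e x| = 1.
Proof.
move=> e_sym e_irr /nedges_eq0 no_edge x.
have no_path3 : ~ has_induced_path3 e setT.
  by move=> [a [b [_ [_ eab _ _ _]]]]; rewrite (negbTE (no_edge a b)) in eab.
split; first exact: clique_component.
rewrite card_component //; congr _.+1; apply/eqP; rewrite cards_eq0; apply/eqP/setP => v.
by rewrite !inE (negbTE (no_edge x v)).
Qed.

Section ExtremalGraphs.
Variables (T : finType) (e : rel T) (t : nat).
Hypotheses (e_sym : symmetric e) (e_irr : irreflexive e).
Hypothesis no_forest : ~ has_induced_forest e (2 * t + 1).

Lemma nedges_secant3_eq_component x : 2 * nedges e + 3 * 4 * t = 2 * 3 * #|T| ->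
  clique e (component e x) /\
  (#|component e x| = 1 \/ #|component e x| = 3 \/ #|component e x| = 4).
Proof.
move/(nedges_secant_bound_eq (k := 3) e_sym e_irr no_forest isT) => [_ no_path3 gap0].
split; first exact: clique_component.
rewrite card_component //.
by case: (secant_gap_eq0 (k := 3) isT (gap0 x)) => [->|->|[_ ->]]; auto.
Qed.

Lemma nedges_secant_eq_iso k : 4 <= k -> 2 * nedges e + k * k.+1 * t = 2 * k * #|T| ->
  graph_iso e (Gnt #|T| t).
Proof.
move=> k_ge4 /(nedges_secant_bound_eq e_sym e_irr no_forest (ltnW k_ge4)).
move=> [W_eq no_path3 gap0].
have deg_k u : deg e setT u = k.-1 \/ deg e setT u = k.
  by case: (secant_gap_eq0 (ltnW k_ge4) (gap0 u)) => [|| [k3]]; [left | right | lia].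
apply: (cluster_graph_iso (k := k)) => // [|x].
  apply/eqP; rewrite -(eqn_pmul2l (isT : 0 < 2)) -(eqr_nat rat) -W_eq.
  by rewrite weight_components // => u; case: (deg_k u) => ->; lia.
by rewrite card_component //; case: (deg_k x) => ->; [left; lia | right].
Qed.

End ExtremalGraphs.

Theorem theorem4p1 (T : finType) (e : rel T) (t : nat) :
  symmetric e -> irreflexive e ->
  1 <= #|T| -> 1 <= t ->
  ~ has_induced_forest e (2 * t + 1) ->
  g #|T| t <= nedges e /\
  (nedges e = g #|T| t -> #|T| < 4 * t ->
     forall x : T, clique e (component e x) /\
       (#|component e x| = 1 \/ #|component e x| = 3 \/ #|component e x| = 4)) /\
  (nedges e = g #|T| t -> 4 * t <= #|T| -> graph_iso e (Gnt #|T| t)).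
Proof.
move=> e_sym e_irr _ t_gt0 no_forest.
have bound := nedges_secant_bound e_sym e_irr no_forest.
have [lt_n_2t|le_2t_n] := ltnP #|T| (2 * t).
  rewrite g_small //; split=> //; split=> [m0 _ x|_ ?]; last by exfalso; lia.
  by have [clique_x ->] := edgeless_component e_sym e_irr m0 x; split=> //; left.
have [lt_n_4t|le_4t_n] := ltnP #|T| (4 * t).
  have gE : 2 * g #|T| t + 3 * 4 * t = 2 * 3 * #|T| by rewrite g_secant_mid // le_2t_n ltnW.
  split; first by have := bound 3 isT; lia.
  split=> [m_eq _ x|_ ?]; last by exfalso; lia.
  by apply: (nedges_secant3_eq_component e_sym e_irr no_forest); lia.
set k := #|T| %/ t; have k_ge4 : 4 <= k by rewrite leq_divRL // mulnC.
have gE : 2 * g #|T| t + k * k.+1 * t = 2 * k * #|T| by apply: g_secant_big.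
split; first by have := bound k (ltnW k_ge4); lia.
split=> [_ ?|m_eq _]; first by exfalso; lia.
by apply: (nedges_secant_eq_iso e_sym e_irr no_forest k_ge4); lia.
Qed.
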